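(* The reduction relation $\to_{\tt j}$ on $\lambda j$-terms is confluent and terminating. Consequently every term $t$ has a unique ${\tt j}$-normal form ${\tt j}(t)$, and: ${\tt j}(x)=x$, ${\tt j}(\lambda x.u)=\lambda x.{\tt j}(u)$, ${\tt j}(u\,v)={\tt j}(u)\,{\tt j}(v)$, and ${\tt j}(u[x/v])={\tt j}(u)\{x/{\tt j}(v)\}$.
   Context: $\lambda j$-terms are generated by $t,u::= x\mid \lambda x.t\mid t\,u\mid t[x/u]$ ($x$ ranging over variables); $\lambda x.t$ and $t[x/u]$ bind $x$ in $t$ (not in $u$), and terms are considered modulo $\alpha$-conversion. $\mathrm{fv}(t)$ is the set of free variables, $t\{x/u\}$ is capture-avoiding meta-level substitution, and $|t|_x$ is the number of free occurrences of $x$ in $t$. If $|t|_x=n\ge2$, $t_{[y]_x}$ denotes any term obtained from $t$ by replacing $k$ of the free occurrences of $x$ by a fresh variable $y$, for some $1\le k\le n-1$. The relation $\to_{\tt j}$ is the closure under all contexts of the rules: $({\tt w})$ $t[x/u]\to t$ if $|t|_x=0$; $({\tt d})$ $t[x/u]\to t\{x/u\}$ if $|t|_x=1$; $({\tt c})$ $t[x/u]\to t_{[y]_x}[x/u][y/u]$ if $|t|_x\ge2$, $y$ fresh. *)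

(* lambda-j terms modulo alpha-conversion, represented with
   de Bruijn indices (alpha-equivalent terms are syntactically equal). *)
From Stdlib Require Import Arith Relations.

(* Var n : variable with de Bruijn index n
   Lam t : \x.t  (binds index 0 in t)
   App t u : t u
   ES t u : t[x/u]  (binds index 0 in t, not in u) *)
Inductive term : Type :=
| Var : nat -> term
| Lam : term -> term
| App : term -> term -> term
| ES  : term -> term -> term.

Fixpoint lift (c : nat) (t : term) : term :=
  match t with
  | Var n => if n <? c then Var n else Var (S n)
  | Lam t1 => Lam (lift (S c) t1)
  | App t1 t2 => App (lift c t1) (lift c t2)
  | ES t1 t2 => ES (lift (S c) t1) (lift c t2)
  end.

(* subst k u t : capture-avoiding meta-substitution t{k/u}: index k is
   replaced by u (which lives in the context with k's binder removed),
   indices > k are decremented (the binder of k disappears). *)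
Fixpoint subst (k : nat) (u : term) (t : term) : term :=
  match t with
  | Var n => if n <? k then Var n else if n =? k then u else Var (pred n)
  | Lam t1 => Lam (subst (S k) (lift 0 u) t1)
  | App t1 t2 => App (subst k u t1) (subst k u t2)
  | ES t1 t2 => ES (subst (S k) (lift 0 u) t1) (subst k u t2)
  end.

Fixpoint occ (k : nat) (t : term) : nat :=
  match t with
  | Var n => if n =? k then 1 else 0
  | Lam t1 => occ (S k) t1
  | App t1 t2 => occ k t1 + occ k t2
  | ES t1 t2 => occ (S k) t1 + occ k t2
  end.

(* split d t t' : t' is obtained from t by inserting a fresh variable y
   (index d+1 in t', the old index d = x stays d) and replacing SOME of the
   free occurrences of x by y. *)
Inductive split : nat -> term -> term -> Prop :=
| sp_lt : forall d n, n < d -> split d (Var n) (Var n)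
| sp_x  : forall d, split d (Var d) (Var d)
| sp_y  : forall d, split d (Var d) (Var (S d))
| sp_gt : forall d n, d < n -> split d (Var n) (Var (S n))
| sp_lam : forall d t t', split (S d) t t' -> split d (Lam t) (Lam t')
| sp_app : forall d t t' u u', split d t t' -> split d u u' ->
    split d (App t u) (App t' u')
| sp_es : forall d t t' u u', split (S d) t t' -> split d u u' ->
    split d (ES t u) (ES t' u').

(* For t[x/u] = ES t u, x is index 0 of t.
   (w): t[x/u] -> t  (when |t|_x = 0; in de Bruijn the binder is removed,
        which is subst 0 u t since x does not occur).
   (d): t[x/u] -> t{x/u}  (when |t|_x = 1).
   (c): t[x/u] -> t_[y]_x [x/u][y/u] (when |t|_x >= 2), where t' = t_[y]_x has
        x at index 0, y at index 1, and k occurrences of x renamed with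
        1 <= k <= n-1, i.e. both x and y occur in t'. *)
Inductive jhead : term -> term -> Prop :=
| r_w : forall t u, occ 0 t = 0 -> jhead (ES t u) (subst 0 u t)
| r_d : forall t u, occ 0 t = 1 -> jhead (ES t u) (subst 0 u t)
| r_c : forall t t' u, 2 <= occ 0 t -> split 0 t t' ->
    1 <= occ 0 t' -> 1 <= occ 1 t' ->
    jhead (ES t u) (ES (ES t' (lift 0 u)) u).

Inductive jstep : term -> term -> Prop :=
| js_head : forall t t', jhead t t' -> jstep t t'
| js_lam : forall t t', jstep t t' -> jstep (Lam t) (Lam t')
| js_appl : forall t t' u, jstep t t' -> jstep (App t u) (App t' u)
| js_appr : forall t u u', jstep u u' -> jstep (App t u) (App t u')
| js_esl : forall t t' u, jstep t t' -> jstep (ES t u) (ES t' u)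
| js_esr : forall t u u', jstep u u' -> jstep (ES t u) (ES t u').

Definition jstar : term -> term -> Prop := clos_refl_trans term jstep.

Definition confluent_j : Prop :=
  forall t a b, jstar t a -> jstar t b -> exists c, jstar a c /\ jstar b c.

Definition SN_j (t : term) : Prop := Acc (fun a b => jstep b a) t.

Definition jnormal (t : term) : Prop := forall t', ~ jstep t t'.

Definition jnf (t n : term) : Prop := jstar t n /\ jnormal n.

(* The proof rests on the function [jnorm], the paper's j(t), which executes
   every explicit substitution as a meta-level substitution:
     jnorm (t[x/u]) = (jnorm t){x/jnorm u}.
   1. De Bruijn algebra: commutation of [lift] and [subst].
   2. [jnorm] is invariant under ->_j (a duplication step t -> t_[y]_x[x/u][y/u]
      is undone by merging y back into x), every term reduces to its [jnorm],
      and the normal forms are exactly the terms without explicit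
      substitutions, i.e. the image of [jnorm].  Confluence and uniqueness of
      normal forms follow at once.
   3. Termination: occurrences are weighted by a function f, an occurrence
      inside the argument u of t[x/u] being counted f(#x in t) times; the
      weighted size [wsize f] strictly decreases along ->_j as soon as f is
      monotone, f n > n and f a + f b < f (a + b) for a, b >= 1 (e.g. 3^n). *)
From Stdlib Require Import Arith Relations.
From Stdlib Require Import Lia.

#[local] Arguments Nat.eqb : simpl never.
#[local] Arguments Nat.ltb : simpl never.

Ltac index_cases := repeat (simpl; match goal with
  | |- context [?a <? ?b] => destruct (Nat.ltb_spec a b)
  | |- context [?a =? ?b] => destruct (Nat.eqb_spec a b)
  end); simpl; try lia; try reflexivity; try (f_equal; lia).

(** * De Bruijn algebra *)

Lemma lift_lift : forall u i c, i <= c ->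
  lift (S c) (lift i u) = lift i (lift c u).
Proof.
  induction u; intros i c H; simpl.
  - index_cases.
  - rewrite IHu by lia; reflexivity.
  - rewrite IHu1, IHu2 by lia; reflexivity.
  - rewrite IHu1, IHu2 by lia; reflexivity.
Qed.

Lemma subst_lift : forall t k u, subst k u (lift k t) = t.
Proof.
  induction t; intros k u; simpl.
  - index_cases.
  - rewrite IHt; reflexivity.
  - rewrite IHt1, IHt2; reflexivity.
  - rewrite IHt1, IHt2; reflexivity.
Qed.

Lemma lift_subst_ge : forall t k c u, k <= c ->
  lift c (subst k u t) = subst k (lift c u) (lift (S c) t).
Proof.
  induction t; intros k c u H; simpl.
  - index_cases.
  - rewrite IHt, lift_lift by lia; reflexivity.
  - rewrite IHt1, IHt2 by lia; reflexivity.
  - rewrite IHt1, IHt2, lift_lift by lia; reflexivity.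
Qed.

Lemma lift_subst_le : forall t k c u, c <= k ->
  lift c (subst k u t) = subst (S k) (lift c u) (lift c t).
Proof.
  induction t; intros k c u H; simpl.
  - index_cases.
  - rewrite IHt, lift_lift by lia; reflexivity.
  - rewrite IHt1, IHt2 by lia; reflexivity.
  - rewrite IHt1, IHt2, lift_lift by lia; reflexivity.
Qed.

Lemma subst_subst : forall t j k u v, j <= k ->
  subst k u (subst j v t) = subst j (subst k u v) (subst (S k) (lift j u) t).
Proof.
  induction t; intros j k u v H; simpl.
  - index_cases; subst; try (rewrite subst_lift; reflexivity).
    all: replace n with (S k) in * by lia; index_cases; rewrite subst_lift; reflexivity.
  - rewrite IHt, lift_lift, <- lift_subst_le by lia; reflexivity.
  - rewrite IHt1, IHt2 by lia; reflexivity.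
  - rewrite IHt1, IHt2, lift_lift, <- lift_subst_le by lia; reflexivity.
Qed.

(** * Weighted occurrences *)

(* [wocc f x t] counts the free occurrences of x in t, an occurrence inside
   the argument b of a[y/b] being counted f (wocc f 0 a) times: the number of
   copies of b that duplication steps may produce, amplified by f. *)
Fixpoint wocc (f : nat -> nat) (x : nat) (t : term) : nat :=
  match t with
  | Var n => if n =? x then 1 else 0
  | Lam a => wocc f (S x) a
  | App a b => wocc f x a + wocc f x b
  | ES a b => wocc f (S x) a + f (wocc f 0 a) * wocc f x b
  end.

Lemma occ_wocc : forall t k, occ k t = wocc (fun _ => 1) k t.
Proof.
  induction t; intros k; simpl; rewrite ?IHt, ?IHt1, ?IHt2; lia.
Qed.

Lemma wocc_lift : forall f u c y,
  wocc f y (lift c u) =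
  if y <? c then wocc f y u else if y =? c then 0 else wocc f (pred y) u.
Proof.
  induction u; intros c y; simpl.
  - index_cases.
  - rewrite IHu. index_cases; replace (S (pred y)) with y by lia; reflexivity.
  - rewrite IHu1, IHu2. index_cases.
  - rewrite IHu1, IHu2, IHu1. index_cases; replace (S (pred y)) with y by lia; reflexivity.
Qed.

Lemma wocc_lift0 : forall f u, wocc f 0 (lift 0 u) = 0.
Proof. intros. rewrite wocc_lift. reflexivity. Qed.

Lemma wocc_liftS : forall f u y, wocc f (S y) (lift 0 u) = wocc f y u.
Proof. intros. rewrite wocc_lift. reflexivity. Qed.

Lemma wocc_subst : forall f t k u y,
  wocc f y (subst k u t) =
  wocc f (if y <? k then y else S y) t + wocc f k t * wocc f y u.
Proof.
  induction t; intros k u y; simpl.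
  - index_cases; subst; index_cases.
  - rewrite IHt, wocc_liftS. index_cases.
  - rewrite IHt1, IHt2. ring.
  - rewrite IHt1, IHt2, IHt1, wocc_liftS, wocc_lift0.
    replace (if 0 <? S k then 0 else 1) with 0 by index_cases.
    replace (if S y <? S k then S y else S (S y))
      with (S (if y <? k then y else S y)) by index_cases.
    rewrite Nat.mul_0_r, Nat.add_0_r. ring.
Qed.

Lemma occ_le_wocc : forall f, (forall n, 1 <= f n) ->
  forall t k, occ k t <= wocc f k t.
Proof.
  intros f Hf; induction t; intros k; simpl.
  - lia.
  - apply IHt.
  - specialize (IHt1 k); specialize (IHt2 k); lia.
  - specialize (IHt1 (S k)); specialize (IHt2 k); specialize (Hf (wocc f 0 t1)); nia.
Qed.

Lemma split_merge : forall d s s', split d s s' -> subst d (Var d) s' = s.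
Proof. induction 1; simpl; index_cases; congruence. Qed.

Lemma split_merge_subst : forall s s' u, split 0 s s' ->
  subst 0 u (subst 0 (lift 0 u) s') = subst 0 u s.
Proof.
  intros s s' u H. rewrite <- (split_merge _ _ _ H).
  rewrite subst_subst, (subst_subst s' 0 0 u (Var 0)), subst_lift by lia.
  reflexivity.
Qed.

Lemma split_none : forall t d,
  exists t', split d t t' /\ occ d t' = occ d t /\ occ (S d) t' = 0.
Proof.
  induction t; intros d.
  - destruct (lt_eq_lt_dec n d) as [[H|H]|H].
    + exists (Var n); split; [apply sp_lt; lia | split; index_cases].
    + subst; exists (Var d); split; [apply sp_x | split; index_cases].
    + exists (Var (S n)); split; [apply sp_gt; lia | split; index_cases].
  - destruct (IHt (S d)) as [t' [H1 H2]].
    exists (Lam t'); split; [constructor|]; auto.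
  - destruct (IHt1 d) as [a [H1 H2]], (IHt2 d) as [b [H3 H4]].
    exists (App a b); split; [constructor|simpl]; auto; lia.
  - destruct (IHt1 (S d)) as [a [H1 H2]], (IHt2 d) as [b [H3 H4]].
    exists (ES a b); split; [constructor|simpl]; auto; lia.
Qed.

Lemma split_one : forall t d, 1 <= occ d t ->
  exists t', split d t t' /\ occ d t' = occ d t - 1 /\ occ (S d) t' = 1.
Proof.
  induction t; intros d Hd; simpl in Hd.
  - destruct (Nat.eqb_spec n d); [subst | lia].
    exists (Var (S d)); split; [apply sp_y | split; index_cases].
  - destruct (IHt (S d)) as [t' [H1 H2]]; auto.
    exists (Lam t'); split; [constructor|]; auto.
  - destruct (le_lt_dec 1 (occ d t1)).
    + destruct (IHt1 d) as [a [H1 H2]], (split_none t2 d) as [b [H3 H4]]; auto.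
      exists (App a b); split; [constructor|simpl]; auto; lia.
    + destruct (split_none t1 d) as [a [H1 H2]], (IHt2 d) as [b [H3 H4]]; [lia|].
      exists (App a b); split; [constructor|simpl]; auto; lia.
  - destruct (le_lt_dec 1 (occ (S d) t1)).
    + destruct (IHt1 (S d)) as [a [H1 H2]], (split_none t2 d) as [b [H3 H4]]; auto.
      exists (ES a b); split; [constructor|simpl]; auto; lia.
    + destruct (split_none t1 (S d)) as [a [H1 H2]], (IHt2 d) as [b [H3 H4]]; [lia|].
      exists (ES a b); split; [constructor|simpl]; auto; lia.
Qed.

(** * Termination *)

Section WeightedSize.

Variable f : nat -> nat.
Hypothesis f_mono : forall m n, m <= n -> f m <= f n.
Hypothesis f_gt : forall n, n < f n.
Hypothesis f_superadd : forall m n, 1 <= m -> 1 <= n -> f m + f n < f (m + n).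

Fixpoint wsize (t : term) : nat :=
  match t with
  | Var _ => 1
  | Lam a => wsize a
  | App a b => wsize a + wsize b
  | ES a b => wsize a + f (wocc f 0 a) * wsize b
  end.

Lemma f_pos : forall n, 1 <= f n.
Proof. intro n; specialize (f_gt n); lia. Qed.

Lemma wsize_pos : forall t, 1 <= wsize t.
Proof. induction t; simpl; pose proof f_pos; try nia. Qed.

Lemma wsize_lift : forall t c, wsize (lift c t) = wsize t.
Proof.
  induction t; intros c; simpl; rewrite ?IHt, ?IHt1, ?IHt2, ?wocc_lift; auto.
  destruct (n <? c); reflexivity.
Qed.

Lemma wsize_subst : forall t k u,
  wsize (subst k u t) + wocc f k t = wsize t + wocc f k t * wsize u.
Proof.
  induction t; intros k u; simpl.
  - index_cases; subst; rewrite Nat.eqb_refl; lia.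
  - rewrite IHt, wsize_lift; reflexivity.
  - specialize (IHt1 k u); specialize (IHt2 k u); nia.
  - specialize (IHt1 (S k) (lift 0 u)); specialize (IHt2 k u).
    rewrite wsize_lift in IHt1.
    rewrite wocc_subst, wocc_lift0; simpl; rewrite Nat.mul_0_r, Nat.add_0_r.
    set (F := f (wocc f 0 t1)) in *. nia.
Qed.

(* A j-step strictly decreases [wsize] without increasing any weighted
   occurrence count; the latter makes the decrease compatible with contexts. *)
Definition decreases (t t' : term) : Prop :=
  wsize t' < wsize t /\ forall x, wocc f x t' <= wocc f x t.

Lemma subst_decreases : forall t u, decreases (ES t u) (subst 0 u t).
Proof.
  intros t u. pose proof (wsize_subst t 0 u). pose proof (f_gt (wocc f 0 t)).
  pose proof (wsize_pos u). split; simpl.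
  - set (F := f (wocc f 0 t)) in *. nia.
  - intro x. rewrite wocc_subst. simpl.
    apply Nat.add_le_mono_l, Nat.mul_le_mono_r. lia.
Qed.

(* Rule (c): with m >= 1 occurrences of x and n >= 1 of y, the f (m + n)
   copies of u weigh more than the f m + f n copies after duplication. *)
Lemma duplication_decreases : forall t' u,
  1 <= occ 0 t' -> 1 <= occ 1 t' ->
  decreases (ES (subst 0 (Var 0) t') u) (ES (ES t' (lift 0 u)) u).
Proof.
  intros t' u H0 H1.
  pose proof (occ_le_wocc f f_pos t' 0) as Hm_pos.
  pose proof (occ_le_wocc f f_pos t' 1) as Hn_pos.
  set (m := wocc f 0 t') in *. set (n := wocc f 1 t') in *.
  assert (Hmerge : forall y, wocc f y (subst 0 (Var 0) t') =
                             wocc f (S y) t' + m * (if 0 =? y then 1 else 0))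
    by (intro y; apply wocc_subst).
  assert (Hx : wocc f 0 (subst 0 (Var 0) t') = n + m)
    by (rewrite Hmerge; simpl; lia).
  assert (Hy : wocc f 0 (ES t' (lift 0 u)) = n)
    by (simpl; rewrite wocc_lift0; lia).
  pose proof (f_superadd n m ltac:(lia) ltac:(lia)) as Hsuper.
  pose proof (wsize_subst t' 0 (Var 0)) as Hmerge_size.
  pose proof (wsize_pos u) as Hu_pos.
  split.
  - change (wsize t' + f (wocc f 0 t') * wsize (lift 0 u)
              + f (wocc f 0 (ES t' (lift 0 u))) * wsize u
            < wsize (subst 0 (Var 0) t') + f (wocc f 0 (subst 0 (Var 0) t')) * wsize u).
    rewrite Hx, Hy, wsize_lift. fold m. simpl in *. nia.
  - intro x. change (wocc f (S (S x)) t' + f m * wocc f (S x) (lift 0 u)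
                       + f (wocc f 0 (ES t' (lift 0 u))) * wocc f x u
                     <= wocc f (S x) (subst 0 (Var 0) t')
                        + f (wocc f 0 (subst 0 (Var 0) t')) * wocc f x u).
    rewrite Hx, Hy, Hmerge, wocc_liftS. simpl. nia.
Qed.

Lemma step_decreases : forall t t', jstep t t' -> decreases t t'.
Proof.
  induction 1 as [t t' Hhead | t t' _ [Hsize Hocc] | t t' u _ [Hsize Hocc]
                 | t u u' _ [Hsize Hocc] | t t' u _ [Hsize Hocc] | t u u' _ [Hsize Hocc]].
  - destruct Hhead as [t u _|t u _|t t' u _ Hsplit H0 H1].
    1, 2: apply subst_decreases.
    rewrite <- (split_merge _ _ _ Hsplit). now apply duplication_decreases.
  - split; [exact Hsize | intro x; apply (Hocc (S x))].
  - split; simpl; [lia | intro x; specialize (Hocc x); lia].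
  - split; simpl; [lia | intro x; specialize (Hocc x); lia].
  - pose proof (f_mono _ _ (Hocc 0)).
    split; simpl; [nia | intro x; specialize (Hocc (S x)); nia].
  - pose proof (f_pos (wocc f 0 t)).
    split; simpl; [nia | intro x; specialize (Hocc x); nia].
Qed.

Lemma wsize_SN : forall t, SN_j t.
Proof.
  intro t. remember (wsize t) as n. revert t Heqn.
  induction n as [n IH] using lt_wf_ind. intros t Ht. constructor. intros t' Hs.
  apply (IH (wsize t')); [destruct (step_decreases _ _ Hs); lia | reflexivity].
Qed.

End WeightedSize.

(* The weight 3^n meets the requirements: 3^m + 3^n <= 2 * 3^(m+n-1) < 3^(m+n). *)
Lemma SN_all : forall t, SN_j t.
Proof.
  apply (wsize_SN (fun n => 3 ^ n)).
  - intros m n H; apply Nat.pow_le_mono_r; lia.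
  - intro n; apply Nat.pow_gt_lin_r; lia.
  - intros m n Hm Hn. rewrite Nat.pow_add_r.
    assert (3 ^ 1 <= 3 ^ m) by (apply Nat.pow_le_mono_r; lia).
    assert (3 ^ 1 <= 3 ^ n) by (apply Nat.pow_le_mono_r; lia).
    simpl in *; nia.
Qed.

(** * The normal-form function *)

Fixpoint jnorm (t : term) : term :=
  match t with
  | Var n => Var n
  | Lam a => Lam (jnorm a)
  | App a b => App (jnorm a) (jnorm b)
  | ES a b => subst 0 (jnorm b) (jnorm a)
  end.

Lemma jnorm_lift : forall t c, jnorm (lift c t) = lift c (jnorm t).
Proof.
  induction t; intros c; simpl.
  - destruct (n <? c); reflexivity.
  - rewrite IHt; reflexivity.
  - rewrite IHt1, IHt2; reflexivity.
  - rewrite IHt1, IHt2, lift_subst_ge by lia; reflexivity.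
Qed.

Lemma jnorm_subst : forall t k u, jnorm (subst k u t) = subst k (jnorm u) (jnorm t).
Proof.
  induction t; intros k u; simpl.
  - destruct (n <? k); [|destruct (n =? k)]; reflexivity.
  - rewrite IHt, jnorm_lift; reflexivity.
  - rewrite IHt1, IHt2; reflexivity.
  - rewrite IHt1, IHt2, jnorm_lift, (subst_subst (jnorm t1) 0 k) by lia; reflexivity.
Qed.

(* jnorm is invariant under ->_j; for (c) because merging y back into x
   undoes the split. *)
Lemma jnorm_step : forall t t', jstep t t' -> jnorm t = jnorm t'.
Proof.
  induction 1 as [t t' Hhead| | | | |]; simpl; try congruence.
  destruct Hhead as [t u _|t u _|t t' u _ Hsplit _ _]; simpl; rewrite ?jnorm_subst; auto.
  rewrite <- (split_merge _ _ _ Hsplit), jnorm_subst, jnorm_lift; simpl.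
  rewrite (subst_subst (jnorm t') 0 0 (jnorm u) (Var 0)),
          (subst_subst (jnorm t') 0 0 (jnorm u) (lift 0 (jnorm u))), subst_lift by lia.
  reflexivity.
Qed.

Lemma jstar_jnorm : forall t t', jstar t t' -> jnorm t = jnorm t'.
Proof. induction 1; auto using jnorm_step; congruence. Qed.

(** * Normal forms are the terms without explicit substitutions *)

Fixpoint es_free (t : term) : Prop :=
  match t with
  | Var _ => True
  | Lam a => es_free a
  | App a b => es_free a /\ es_free b
  | ES _ _ => False
  end.

Lemma es_free_lift : forall t c, es_free t -> es_free (lift c t).
Proof.
  induction t; intros c H; simpl in *; try tauto.
  - destruct (n <? c); exact I.
  - auto.
  - destruct H; split; auto.
Qed.

Lemma es_free_subst : forall t k u, es_free u -> es_free t -> es_free (subst k u t).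
Proof.
  induction t; intros k u Hu H; simpl in *; try tauto.
  - destruct (n <? k); [exact I|]. destruct (n =? k); [auto|exact I].
  - auto using es_free_lift.
  - destruct H; split; auto.
Qed.

Lemma jnorm_es_free : forall t, es_free (jnorm t).
Proof. induction t; simpl; auto using es_free_subst. Qed.

Lemma jnorm_id : forall t, es_free t -> jnorm t = t.
Proof. induction t; simpl; intros; try tauto; f_equal; tauto. Qed.

(* Every rule fires on an explicit substitution. *)
Lemma es_free_normal : forall t, es_free t -> jnormal t.
Proof.
  intros t H t' Hs. induction Hs as [t t' Hhead| | | | |]; simpl in *; try tauto.
  destruct Hhead; exact H.
Qed.

(* Conversely every explicit substitution t[x/u] is a redex: by (w), (d) or,
   splitting off one occurrence of x, by (c). *)
Lemma es_free_or_step : forall t, es_free t \/ exists t', jstep t t'.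
Proof.
  induction t; simpl.
  - left; exact I.
  - destruct IHt as [H|[t' H]]; [left; auto | right; eexists; apply js_lam, H].
  - destruct IHt1 as [H|[t' H]]; [|right; eexists; apply js_appl, H].
    destruct IHt2 as [H'|[t' H']]; [left; auto | right; eexists; apply js_appr, H'].
  - right. destruct (occ 0 t1) as [|[|n]] eqn:E.
    + eexists; apply js_head, r_w, E.
    + eexists; apply js_head, r_d, E.
    + destruct (split_one t1 0) as [t' [Hsplit [H0 H1]]]; [lia|].
      eexists; apply js_head, (r_c t1 t' t2); auto; lia.
Qed.

Lemma normal_es_free : forall t, jnormal t -> es_free t.
Proof.
  intros t H. destruct (es_free_or_step t) as [P|[t' Hs]]; auto.
  exfalso; exact (H t' Hs).
Qed.

Lemma jstar_map : forall g : term -> term,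
  (forall a b, jstep a b -> jstep (g a) (g b)) ->
  forall a b, jstar a b -> jstar (g a) (g b).
Proof.
  intros g Hg a b H. induction H.
  - apply rt_step, Hg; assumption.
  - apply rt_refl.
  - eapply rt_trans; eassumption.
Qed.

(* t[x/u] ->*_j t{x/u}: split off one occurrence of x at a time by (c),
   then erase the last copy by (d) or (w). *)
Lemma es_to_subst : forall n t u, occ 0 t = n -> jstar (ES t u) (subst 0 u t).
Proof.
  induction n as [n IH] using lt_wf_ind. intros t u Hn.
  destruct n as [|[|n]].
  - apply rt_step, js_head, r_w; auto.
  - apply rt_step, js_head, r_d; auto.
  - destruct (split_one t 0) as [t' [Hsplit [H0 H1]]]; [lia|].
    eapply rt_trans; [apply rt_step, js_head, (r_c t t' u); auto; lia|].
    eapply rt_trans.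
    { apply (jstar_map (fun a => ES a u)); [intros; apply js_esl; auto|].
      apply (IH (occ 0 t')); [lia | reflexivity]. }
    rewrite <- (split_merge_subst t t' u Hsplit).
    apply rt_step, js_head, r_d.
    rewrite occ_wocc, wocc_subst. simpl. rewrite wocc_lift0, <- !occ_wocc. lia.
Qed.

Lemma jstar_to_jnorm : forall t, jstar t (jnorm t).
Proof.
  induction t; simpl.
  - apply rt_refl.
  - apply (jstar_map Lam); auto using js_lam.
  - apply rt_trans with (App (jnorm t1) t2).
    + apply (jstar_map (fun a => App a t2)); auto using js_appl.
    + apply (jstar_map (App (jnorm t1))); auto using js_appr.
  - apply rt_trans with (ES (jnorm t1) (jnorm t2)).
    + apply rt_trans with (ES (jnorm t1) t2).
      * apply (jstar_map (fun a => ES a t2)); auto using js_esl.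
      * apply (jstar_map (ES (jnorm t1))); auto using js_esr.
    + apply (es_to_subst _ _ _ eq_refl).
Qed.

Lemma jnf_jnorm : forall t, jnf t (jnorm t).
Proof.
  intro t; split; [apply jstar_to_jnorm | apply es_free_normal, jnorm_es_free].
Qed.

Lemma jnf_unique : forall t n, jnf t n -> n = jnorm t.
Proof.
  intros t n [Hred Hnormal].
  rewrite (jstar_jnorm _ _ Hred). symmetry. apply jnorm_id, normal_es_free, Hnormal.
Qed.

Theorem lemma9 :
  confluent_j /\
  (forall t, SN_j t) /\
  (forall t, exists! n, jnf t n) /\
  (forall x, jnf (Var x) (Var x)) /\
  (forall u nu, jnf u nu -> jnf (Lam u) (Lam nu)) /\
  (forall u v nu nv, jnf u nu -> jnf v nv -> jnf (App u v) (App nu nv)) /\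
  (forall u v nu nv, jnf u nu -> jnf v nv -> jnf (ES u v) (subst 0 nv nu)).
Proof.
  split; [|split; [|split; [|split; [|split; [|split]]]]].
  - intros t a b Ha Hb. exists (jnorm t).
    rewrite (jstar_jnorm _ _ Ha) at 1. rewrite (jstar_jnorm _ _ Hb).
    split; apply jstar_to_jnorm.
  - exact SN_all.
  - intro t. exists (jnorm t).
    split; [apply jnf_jnorm | intros n Hn; symmetry; apply jnf_unique, Hn].
  - intro x. exact (jnf_jnorm (Var x)).
  - intros u nu Hu. rewrite (jnf_unique _ _ Hu). exact (jnf_jnorm (Lam u)).
  - intros u v nu nv Hu Hv. rewrite (jnf_unique _ _ Hu), (jnf_unique _ _ Hv).
    exact (jnf_jnorm (App u v)).
  - intros u v nu nv Hu Hv. rewrite (jnf_unique _ _ Hu), (jnf_unique _ _ Hv).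
    exact (jnf_jnorm (ES u v)).
Qed.
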